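(* Let $K$ be a field of characteristic zero, let $L$ be a $K$-linear functional on $K[u]$ with moments $\mu_s=L(u^s)$, and let $(p_n(x))_{n\ge0}$ be monic polynomials over $K$ with $\deg p_n=n$ and $L(p_m p_n)=\omega_n\delta_{m,n}$, $\omega_n\neq0$ for all $n$. Write $\int f(u)\,d\mu(u)$ for $L(f)$, and put $q_n(y)=\int \frac{p_n(u)}{y-u}\,d\mu(u)$. Let $k,n$ be non-negative integers and $y_1,\dots,y_k$ variables. If $n\ge k$, then $$ \frac{\det\limits_{0\le i,j\le n-1}\left(\int \frac{u^{i+j}\,d\mu(u)}{\prod_{\ell=1}^k(u-y_\ell)}\right)}{\det\limits_{0\le i,j\le n-k-1}(\mu_{i+j})} =(-1)^{nk}\frac{\det\limits_{1\le i,j\le k}\big(q_{n-k+j-1}(y_i)\big)}{\prod_{1\le i<j\le k}(y_i-y_j)}. $$ If $n<k$, then $$ \det\limits_{0\le i,j\le n-1}\left(\int \frac{u^{i+j}\,d\mu(u)}{\prod_{\ell=1}^k(u-y_\ell)}\right) =(-1)^{nk}\frac{\det N}{\prod_{1\le i<j\le k}(y_i-y_j)}, $$ where $N$ is the $k\times k$ matrix whose $i$-th row is $\big(y_i^{k-n-1},\dots,y_i^2,y_i,1,q_0(y_i),q_1(y_i),\dots,q_{n-1}(y_i)\big)$. Determinants of empty matrices and empty products equal $1$.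
   Context: The notation $\int f(u)\,d\mu(u)$ means $L(f)$; it may be read analytically (if $L$ is given by a measure) or formally: $\frac{1}{u-y}$ for a variable $y$ is expanded as $-\sum_{i\ge0}u^iy^{-i-1}$, a formal power series in $1/y$, and $L$ is applied coefficientwise. In particular $q_n(y)=\sum_{i\ge0}L(u^ip_n(u))\,y^{-i-1}$. *)

From HB Require Import structures.
From mathcomp Require Import all_boot all_order all_algebra.
From mathcomp Require Import boolp zify.
Set Implicit Arguments. Unset Strict Implicit. Unset Printing Implicit Defensive.
Import Order.TTheory GRing.Theory.
Local Open Scope ring_scope.

Record fps (R : Type) := FPS { fcoef : nat -> R }.

HB.instance Definition _ (R : Type) := gen_eqMixin (fps R).
HB.instance Definition _ (R : Type) := gen_choiceMixin (fps R).

Lemma fps_ext (R : Type) (f g : fps R) : (forall n, fcoef f n = fcoef g n) -> f = g.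
Proof. by case: f; case: g => a b H; congr FPS; apply: funext => n; exact: H. Qed.

Section FpsRing.
Variable R : comNzRingType.
Implicit Types f g h : fps R.

Definition fps0 : fps R := FPS (fun _ => 0).
Definition fpsD f g := FPS (fun n => fcoef f n + fcoef g n).
Definition fpsN f := FPS (fun n => - fcoef f n).
Lemma fpsDA : associative fpsD.
Proof. by move=> f g h; apply: fps_ext => n /=; rewrite addrA. Qed.
Lemma fpsDC : commutative fpsD.
Proof. by move=> f g; apply: fps_ext => n /=; rewrite addrC. Qed.
Lemma fps0D : left_id fps0 fpsD.
Proof. by move=> f; apply: fps_ext => n /=; rewrite add0r. Qed.
Lemma fpsND : left_inverse fps0 fpsN fpsD.
Proof. by move=> f; apply: fps_ext => n /=; rewrite addNr. Qed.
HB.instance Definition _ := GRing.isZmodule.Build (fps R) fpsDA fpsDC fps0D fpsND.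

Definition fps1 : fps R := FPS (fun n => (n == 0)%:R).
Definition fpsM f g :=
  FPS (fun n => \sum_(j < n.+1) fcoef f j * fcoef g (n - j)).

Lemma fpsM_rev f g n :
  fcoef (fpsM f g) n = \sum_(j < n.+1) fcoef f (n - j) * fcoef g j.
Proof.
rewrite /= (reindex_inj rev_ord_inj) /=.
by apply: eq_bigr => j _; rewrite (sub_ordK j).
Qed.

Lemma fpsM_def f g n :
  fcoef (fpsM f g) n = \sum_(j < n.+1) fcoef f j * fcoef g (n - j).
Proof. by []. Qed.

Lemma fpsMA : associative fpsM.
Proof.
move=> p q r; apply: fps_ext=> i; rewrite [RHS]fpsM_rev fpsM_def.
pose coef3 j k := fcoef p j * (fcoef q (i - j - k) * fcoef r k).
transitivity (\sum_(j < i.+1) \sum_(k < i.+1 | (k <= i - j)%N) coef3 j k).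
  apply: eq_bigr => j _; rewrite fpsM_rev big_distrr /=.
  by rewrite (big_ord_narrow_leq (leq_subr _ _)).
rewrite (exchange_big_dep predT) //; apply: eq_bigr => k _.
transitivity (\sum_(j < i.+1 | (j <= i - k)%N) coef3 j k).
  apply: eq_bigl => j; rewrite -ltnS -(ltnS j) -!subSn ?leq_ord //.
  by rewrite -subn_gt0 -(subn_gt0 j) -!subnDA addnC.
rewrite (big_ord_narrow_leq (leq_subr _ _)) fpsM_def big_distrl /=.
by apply: eq_bigr => j _; rewrite /coef3 -!subnDA addnC mulrA.
Qed.

Lemma fpsMC : commutative fpsM.
Proof.
by move=> f g; apply: fps_ext => n; rewrite fpsM_rev /=; apply: eq_bigr => j _; rewrite mulrC.
Qed.

Lemma fps1M : left_id fps1 fpsM.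
Proof.
move=> f; apply: fps_ext => n; rewrite /= big_ord_recl subn0 /= mul1r.
by rewrite big1 ?addr0 // => j _; rewrite mul0r.
Qed.

Lemma fpsMDl : left_distributive fpsM fpsD.
Proof.
move=> f g h; apply: fps_ext => n /=; rewrite -big_split /=.
by apply: eq_bigr => j _; rewrite mulrDl.
Qed.

Lemma fps1_neq0 : fps1 != fps0.
Proof.
apply/eqP => /(congr1 (fun f => fcoef f 0)) /= /eqP; by rewrite oner_eq0.
Qed.

HB.instance Definition _ := GRing.Zmodule_isComNzRing.Build (fps R)
  fpsMA fpsMC fps1M fpsMDl fps1_neq0.

Definition fps_unit : {pred fps R} := fun x => `[< exists y, y * x = 1 >].
Definition fps_inv (x : fps R) : fps R :=
  match pselect (exists y, y * x = 1) with
  | left h => projT1 (cid h)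
  | right _ => x
  end.
Lemma fps_mulVx : {in fps_unit, left_inverse 1 fps_inv *%R}.
Proof.
move=> x /asboolP ux; rewrite /fps_inv; case: pselect => // h.
exact: (projT2 (cid h)).
Qed.
Lemma fps_unitPl x y : y * x = 1 -> fps_unit x.
Proof. by move=> h; apply/asboolP; exists y. Qed.
Lemma fps_invr_out : {in [predC fps_unit], fps_inv =1 id}.
Proof.
move=> x; rewrite inE => /asboolPn ux; rewrite /fps_inv; case: pselect => //.
Qed.
HB.instance Definition _ := GRing.ComNzRing_hasMulInverse.Build (fps R)
  fps_mulVx fps_unitPl fps_invr_out.

Lemma fcoefM f g n : fcoef (f * g) n = \sum_(j < n.+1) fcoef f j * fcoef g (n - j).
Proof. by []. Qed.
Lemma fcoef0 n : fcoef (0 : fps R) n = 0. Proof. by []. Qed.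
End FpsRing.

Section FpsIdomain.
Variable R : idomainType.
Lemma fps_integral : GRing.integral_domain_axiom (fps R).
Proof.
move=> f g fg0; apply/negPn/negP; rewrite negb_or => /andP[nf ng].
have exf : exists i, fcoef f i != 0.
  apply/not_existsP => H; apply/negP: nf; rewrite negbK; apply/eqP/fps_ext => n.
  by have /negP := H n; rewrite negbK => /eqP ->.
have exg : exists i, fcoef g i != 0.
  apply/not_existsP => H; apply/negP: ng; rewrite negbK; apply/eqP/fps_ext => n.
  by have /negP := H n; rewrite negbK => /eqP ->.
case: (ex_minnP exf) => i fi mi; case: (ex_minnP exg) => j gj mj.
have : fcoef (f * g) (i + j) = fcoef f i * fcoef g j.
  rewrite fcoefM (bigD1 (Ordinal (leq_addr j i : i < (i + j).+1)%N)) //= addKn.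
  rewrite big1 ?addr0 // => l nl.
  have nli : (l : nat) != i by move: nl; apply: contra => /eqP e; apply/eqP/val_inj.
  have [lti|] := ltnP l i.
    have : fcoef f l == 0 by apply/negPn/negP => /mi; rewrite leqNgt lti.
    by move/eqP ->; rewrite mul0r.
  rewrite leq_eqVlt eq_sym (negbTE nli) /= => ilt.
  have : fcoef g (i + j - l) == 0.
    apply/negPn/negP => /mj; rewrite leqNgt; apply/negP/negPn.
    by have := ltn_ord l; lia.
  by move/eqP ->; rewrite mulr0.
by rewrite fg0 fcoef0 => /esym/eqP; rewrite mulf_eq0 (negbTE fi) (negbTE gj).
Qed.
HB.instance Definition _ := GRing.ComUnitRing_isIntegral.Build (fps R) fps_integral.
End FpsIdomain.

Fixpoint mfps (R : idomainType) (k : nat) : idomainType :=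
  match k with 0 => R | k'.+1 => (fps (mfps R k') : idomainType) end.

(* Multivariate formal power series  R[[x_0, ..., x_{k-1}]]  as iterated     *)
(* univariate ones: mfps R k.+1 = (mfps R k)[[x_k]].  A coefficient function *)
(* c : seq nat -> R is read on exponent lists a of length k, a`_l being the  *)
(* exponent of x_l.                                                          *)

Notation "x %:F" := (@FracField.tofrac _ x) : ring_scope.

Fixpoint mfps_of (R : idomainType) (k : nat) : (seq nat -> R) -> mfps R k :=
  match k with
  | 0 => fun c => c [::]
  | k'.+1 => fun c => (FPS (fun n => mfps_of k' (fun s => c (rcons s n)))
                       : fps (mfps R k'))
  end.

Fixpoint mmap (R S : idomainType) (f : R -> S) (k : nat) : mfps R k -> mfps S k :=
  match k with
  | 0 => fun x => f x
  | k'.+1 => fun x => (FPS (fun n => mmap f (fcoef x n)) : fps (mfps S k'))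
  end.

Definition mconst (R : idomainType) (k : nat) (r : R) : mfps R k :=
  mfps_of k (fun a => if all (fun e => e == 0%N) a then r else 0).

(* univariate series  \sum_e c e * x_l^e  in the variable x_l *)
Definition mser (R : idomainType) (k l : nat) (c : nat -> R) : mfps R k :=
  mfps_of k (fun a =>
    if a == [seq (if j == l then nth 0%N a l else 0%N) | j <- iota 0 k]
    then c (nth 0%N a l) else 0).

Definition mvar (R : idomainType) (k l : nat) : mfps R k :=
  mser k l (fun e => (e == 1%N)%:R).

(* y_l := 1 / x_l, in the fraction field of R[[x_0..x_{k-1}]]; thus a       *)
(* formal power series in 1/y_0, ..., 1/y_{k-1}.                             *)
Definition yvar (R : idomainType) (k l : nat) : {fraction mfps R k} :=
  ((mvar R k l)%:F)^-1.

(* The formal expansion of 1/(u - y_l) = - \sum_{i>=0} u^i y_l^{-i-1},       *)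
(* a series in 1/y_l with coefficients in K[u].                              *)
Definition cauchy_kernel (K : fieldType) (k l : nat) : mfps {poly K} k :=
  mser k l (fun e => if e is i.+1 then - 'X^i else 0).

(* \int f(u) d\mu(u) for a formal series f with coefficients in K[u]:        *)
(* L applied coefficientwise.                                                 *)
Definition fint (K : fieldType) (L : {poly K} -> K) (k : nat)
  (f : mfps {poly K} k) : mfps K k := mmap L f.

(* \int u^m d\mu(u) / \prod_{l=1}^k (u - y_l) *)
Definition int_mono (K : fieldType) (L : {poly K} -> K) (k m : nat) : mfps K k :=
  fint L (mconst k ('X^m) * \prod_(l < k) cauchy_kernel K k l).

(* q_n(y_l) = \int p_n(u) / (y_l - u) d\mu(u) *)
Definition qfun (K : fieldType) (L : {poly K} -> K) (p : nat -> {poly K})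
  (k n l : nat) : mfps K k :=
  fint L (mconst k (p n) * - cauchy_kernel K k l).

Definition hankel (K : fieldType) (L : {poly K} -> K) (m : nat) : K :=
  \det (\matrix_(i < m, j < m) L 'X^(i + j)).

Definition vandermonde_y (K : fieldType) (k : nat) : {fraction mfps K k} :=
  \prod_(i < k) \prod_(j < k | (i < j)%N) (yvar K k i - yvar K k j).

(* Work in the fraction field F of K[[x_0, ..., x_(k-1)]], with y_l = 1/x_l, and
   let nu be the F-linear functional P |-> \int P(u) d\mu(u) / \prod_l (u - y_l)
   on F[u].  The formal Cauchy kernel is a genuine inverse of u - y_l, hence
   nu (f * \prod_l (u - y_l)) = L f and nu (f * \prod_(m <> l) (u - y_m)) = - q_f(y_l).
   The Hankel determinant det (nu (u^(i+j))) does not change when u^i and u^j are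
   replaced by monic polynomials of degrees i and j.  For n >= k use p_i for the
   rows and u^j (j < k), p_(j-k) * \prod_l (u - y_l) (j >= k) for the columns: the
   matrix becomes block anti-triangular, with the diagonal block
   diag (omega_0, ..., omega_(n-k-1)) of determinant det (mu_(i+j)) and the block
   nu (p_(n-k+i) u^j).  Multiplying the latter by the coefficient matrix of the
   Lagrange polynomials \prod_(m <> l) (u - y_m), of determinant
   \prod_(i<j) (y_i - y_j), yields the matrix (-q_(n-k+i)(y_l)).  For n < k the
   n x n matrix is first bordered by k - n rows of divided differences of u^s at
   the y_l, which vanish for s < k - 1 and equal 1 for s = k - 1; against the
   Lagrange coefficients they produce the monomial columns of N. *)

From HB Require Import structures.
From mathcomp Require Import all_boot all_order all_algebra.
From mathcomp Require Import zify ring perm.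
Set Implicit Arguments. Unset Strict Implicit. Unset Printing Implicit Defensive.
Import Order.TTheory GRing.Theory.
Local Open Scope ring_scope.

Section FpsConst.
Variable R : comNzRingType.
Implicit Types (c : R) (f : fps R).

Definition fpsC c : fps R := FPS (fun n => if n == 0%N then c else 0).
Definition fpsX : fps R := FPS (fun n => (n == 1%N)%:R).

Lemma mul_fpsC c f : fpsC c * f = FPS (fun n => c * fcoef f n).
Proof.
apply: fps_ext => n; rewrite fcoefM big_ord_recl /= subn0.
by rewrite big1 ?addr0 // => j _; rewrite mul0r.
Qed.

Lemma mul_fpsX f : fpsX * f = FPS (fun n => if n is n'.+1 then fcoef f n' else 0).
Proof.
apply: fps_ext => -[|n]; rewrite fcoefM.
  by rewrite big_ord_recl big_ord0 /= mul0r addr0.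
rewrite big_ord_recl /= mul0r add0r big_ord_recl /= mul1r subSS subn0.
by rewrite big1 ?addr0 // => j _; rewrite mul0r.
Qed.

Lemma fpsC_is_zmod_morphism : zmod_morphism fpsC.
Proof. by move=> a b; apply: fps_ext => -[|n] /=; rewrite ?subr0. Qed.

Lemma fpsC_is_monoid_morphism : monoid_morphism fpsC.
Proof.
split=> [|a b]; first by apply: fps_ext => -[|n].
by rewrite mul_fpsC; apply: fps_ext => -[|n] /=; rewrite ?mulr0.
Qed.

HB.instance Definition _ := GRing.isZmodMorphism.Build R (fps R) fpsC
  fpsC_is_zmod_morphism.
HB.instance Definition _ := GRing.isMonoidMorphism.Build R (fps R) fpsC
  fpsC_is_monoid_morphism.

Lemma fpsC_inj : injective fpsC.
Proof. by move=> a b /(congr1 (fun F => fcoef F 0)). Qed.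

End FpsConst.

Definition map_fps (R S : Type) (f : R -> S) (F : fps R) : fps S :=
  FPS (fun n => f (fcoef F n)).

Section MapFps.
Variables (R S : comNzRingType) (f : {additive R -> S}).

Lemma map_fpsC c : map_fps f (fpsC c) = fpsC (f c).
Proof. by apply: fps_ext => -[|n] /=; rewrite ?raddf0. Qed.

Lemma map_fpsM : {morph f : a b / a * b} ->
  {morph map_fps f : F G / F * G}.
Proof.
move=> fM F G; apply: fps_ext => n.
transitivity (f (fcoef (F * G) n)); first by [].
rewrite !fcoefM raddf_sum.
by apply: eq_bigr => j _; rewrite fM.
Qed.

End MapFps.

Section MultivariateFps.
Variable R : idomainType.

Lemma eq_mfps_of k (c c' : seq nat -> R) :
  (forall s, size s = k -> c s = c' s) -> mfps_of k c = mfps_of k c'.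
Proof.
elim: k c c' => [|k IH] c c' cc'; first exact: cc'.
by apply: fps_ext => n /=; apply: IH => s sk; rewrite cc' // size_rcons sk.
Qed.

Lemma mfps_of0 k : mfps_of k (fun=> 0 : R) = 0.
Proof. by elim: k => [|k IH] //; apply: fps_ext => n /=; exact: IH. Qed.

Lemma mconstS k (r : R) : mconst k.+1 r = fpsC (mconst k r).
Proof.
apply: fps_ext => n /=; rewrite /mconst /=; case: eqP => [->|/eqP n0].
  by apply: eq_mfps_of => s _; rewrite all_rcons.
rewrite -(mfps_of0 k); apply: eq_mfps_of => s _.
by rewrite all_rcons /= (negbTE n0).
Qed.

Lemma mconst_is_zmod_morphism k : zmod_morphism (@mconst R k).
Proof. by elim: k => [//|k IH] a b; rewrite !mconstS IH rmorphB. Qed.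

Lemma mconst_is_monoid_morphism k : monoid_morphism (@mconst R k).
Proof.
elim: k => [//|k [IH1 IHM]]; split=> [|a b]; rewrite !mconstS.
  by rewrite IH1 rmorph1.
by rewrite IHM rmorphM.
Qed.

HB.instance Definition _ k := GRing.isZmodMorphism.Build R (mfps R k)
  (@mconst R k) (@mconst_is_zmod_morphism k).
HB.instance Definition _ k := GRing.isMonoidMorphism.Build R (mfps R k)
  (@mconst R k) (@mconst_is_monoid_morphism k).

End MultivariateFps.

Section VariableSeries.
Variable R : idomainType.

Lemma fcoef_mfps_of k (c : seq nat -> R) n :
  fcoef (mfps_of k.+1 c) n = mfps_of k (fun s => c (rcons s n)).
Proof. by []. Qed.

Lemma mserS k l (c : nat -> R) : (l <= k)%N ->
  mser k.+1 l c = if (l < k)%N then fpsC (mser k l c)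
                  else FPS (fun n => mconst k (c n)).
Proof.
have iotaSr m : iota 0 m.+1 = rcons (iota 0 m) m by rewrite -addn1 iotaD cats1.
rewrite leq_eqVlt => /predU1P[->|lk]; rewrite ?ltnn ?lk; apply: fps_ext => n;
  rewrite /mser fcoef_mfps_of [RHS]/=.
  rewrite /mconst; apply: eq_mfps_of => s sk.
  rewrite iotaSr map_rcons eqseq_rcons nth_rcons sk ltnn !eqxx andbT.
  have -> : [seq (if j == k then n else 0%N) | j <- iota 0 k] = nseq k 0%N.
    apply: (@eq_from_nth _ 0%N); rewrite size_map size_iota ?size_nseq // => i ik.
    by rewrite (nth_map 0%N) ?size_iota // nth_iota // nth_nseq ik ltn_eqF.
  have -> : (s == nseq k 0%N) = all (pred1 0%N) s.
    by rewrite -sk; apply/eqP/all_pred1P.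
  by [].
case: (eqVneq n 0%N) => [->|n0]; last rewrite -(mfps_of0 R k);
  apply: eq_mfps_of => s sk;
  rewrite iotaSr map_rcons eqseq_rcons nth_rcons sk lk (gtn_eqF lk) ?andbT //.
by rewrite (negbTE n0) andbF.
Qed.

Lemma mser_fpsC k l (r : R) : (l < k)%N -> mser k l (fcoef (fpsC r)) = mconst k r.
Proof.
elim: k => [//|k IH]; rewrite ltnS => lk; rewrite mserS // mconstS.
case: ltnP => [/IH-> //|_]; apply: fps_ext => -[|n] //=.
by rewrite rmorph0.
Qed.

Lemma mser_fcoefB k l (F G : fps R) : (l < k)%N ->
  mser k l (fcoef (F - G)) = mser k l (fcoef F) - mser k l (fcoef G).
Proof.
elim: k => [//|k IH]; rewrite ltnS => lk; rewrite !mserS //.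
case: ltnP => [/IH-> //|_]; first exact: rmorphB.
by apply: fps_ext => n /=; rewrite rmorphB.
Qed.

Lemma mser_fcoefM k l (F G : fps R) : (l < k)%N ->
  mser k l (fcoef (F * G)) = mser k l (fcoef F) * mser k l (fcoef G).
Proof.
elim: k => [//|k IH]; rewrite ltnS => lk; rewrite !mserS //.
case: ltnP => [/IH-> //|_]; first exact: rmorphM.
exact: (map_fpsM (rmorphM (@mconst R k))).
Qed.

Lemma mvar_neq0 k l : (l < k)%N -> mvar R k l != 0.
Proof.
elim: k => [//|k IH]; rewrite ltnS => lk; rewrite /mvar mserS //.
case: ltnP => [/IH lk' | _]; first by rewrite raddf_eq0 //; exact: fpsC_inj.
by apply/eqP => /(congr1 (fun F => fcoef F 1)) /eqP; rewrite /= rmorph1 oner_eq0.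
Qed.

Lemma mvar_inj k l m : (l < k)%N -> (m < k)%N -> mvar R k l = mvar R k m -> l = m.
Proof.
elim: k l m => [//|k IH] l m; rewrite !ltnS => lk mk.
have coef1 a : (a <= k)%N -> fcoef (mvar R k.+1 a) 1 = (a == k)%:R.
  rewrite /mvar => ak; rewrite mserS //; case: ltnP => [ak' | ka] /=.
    by rewrite ltn_eqF.
  by rewrite rmorph1 (_ : a = k) ?eqxx //; apply/eqP; rewrite eqn_leq ak ka.
move=> e; have := congr1 (fun F => fcoef F 1) e; rewrite !coef1 //.
case: (eqVneq l k) => [->|lk']; case: (eqVneq m k) => [->|mk'] //=.
- by move/eqP; rewrite oner_eq0.
- by move/eqP; rewrite eq_sym oner_eq0.
move=> _; move: e; rewrite /mvar !mserS // ltn_neqAle lk' lk ltn_neqAle mk' mk /=.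
by move/fpsC_inj; apply: IH; rewrite ltn_neqAle ?lk' ?mk'.
Qed.

End VariableSeries.

Section MultivariateMap.
Variables R S : idomainType.

Lemma mmap_is_zmod_morphism (f : {additive R -> S}) k : zmod_morphism (@mmap R S f k).
Proof.
elim: k => [|k IH] x y; first exact: raddfB.
by apply: fps_ext => n /=; rewrite IH.
Qed.

HB.instance Definition _ (f : {additive R -> S}) k :=
  GRing.isZmodMorphism.Build (mfps R k) (mfps S k) (@mmap R S f k)
    (@mmap_is_zmod_morphism f k).

Lemma mmap_mconst (f : {additive R -> S}) k r : mmap f (mconst k r) = mconst k (f r).
Proof.
by elim: k => [//|k IH]; rewrite !mconstS -IH; exact: (map_fpsC (@mmap _ _ f k)).
Qed.

Lemma mmap_is_monoid_morphism (f : {rmorphism R -> S}) k :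
  monoid_morphism (@mmap R S f k).
Proof.
split.
  have <- : mconst k (1 : R) = 1 by exact: rmorph1.
  by rewrite mmap_mconst /= !rmorph1.
elim: k => [|k IH]; first exact: rmorphM.
move=> x y; exact (map_fpsM IH x y).
Qed.

HB.instance Definition _ (f : {rmorphism R -> S}) k :=
  GRing.isMonoidMorphism.Build (mfps R k) (mfps S k) (@mmap R S f k)
    (@mmap_is_monoid_morphism f k).

Lemma mmap_mser (f : {additive R -> S}) k l c : (l < k)%N ->
  mmap f (mser k l c) = mser k l (fun n => f (c n)).
Proof.
elim: k => [//|k IH]; rewrite ltnS => lk; rewrite !mserS //.
case: ltnP => [/IH <- | _]; first exact: (map_fpsC (@mmap _ _ f k)).
by apply: fps_ext => n; exact: mmap_mconst.
Qed.

End MultivariateMap.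

Section CauchyKernel.
Variable K : fieldType.

Definition cauchy_fps : fps {poly K} :=
  FPS (fun n => if n is i.+1 then - 'X^i else 0).

Lemma cauchy_fpsP : cauchy_fps * (fpsC 'X * fpsX _ - fpsC 1) = fpsX _.
Proof.
rewrite mulrBr mulrCA [_ * fpsX _]mulrC mul_fpsX [cauchy_fps * _]mulrC !mul_fpsC.
apply: fps_ext => -[|[|m]] /=.
- by rewrite !mulr0 subr0.
- by rewrite mulr0 mul1r opprK add0r expr0.
- by rewrite mul1r opprK mulrN exprS addNr.
Qed.

(* With y_l = 1/x_l this says cauchy_kernel K k l = 1/(u - y_l). *)
Lemma cauchy_kernelP k l : (l < k)%N ->
  cauchy_kernel K k l * (mconst k 'X * mvar {poly K} k l - 1) = mvar {poly K} k l.
Proof.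
move=> lk; have e : mser k l (fcoef (cauchy_fps * (fpsC 'X * fpsX _ - fpsC 1)))
                    = mser k l (fcoef (fpsX _)) by rewrite cauchy_fpsP.
by rewrite mser_fcoefM // mser_fcoefB // mser_fcoefM // !mser_fpsC // rmorph1 in e.
Qed.

Lemma mmap_polyC_mvar k l : (l < k)%N -> mmap (@polyC K) (mvar K k l) = mvar {poly K} k l.
Proof.
move=> lk; rewrite mmap_mser //; apply: eq_mfps_of => s _.
by case: ifP => // _; exact: polyC_natr.
Qed.

End CauchyKernel.

Definition detn (R : comNzRingType) N (f : nat -> nat -> R) : R :=
  \det (\matrix_(i < N, j < N) f i j).

Section NatIndexedDeterminants.
Variable R : comNzRingType.
Implicit Types f g : nat -> nat -> R.

Lemma eq_detn N f g : (forall i j, (i < N)%N -> (j < N)%N -> f i j = g i j) ->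
  detn N f = detn N g.
Proof. by move=> fg; congr (\det _); apply/matrixP => i j; rewrite !mxE fg. Qed.

Lemma detn_tr N f : detn N (fun i j => f j i) = detn N f.
Proof. by rewrite /detn -det_tr; congr (\det _); apply/matrixP => i j; rewrite !mxE. Qed.

Lemma detn_mul N f g :
  detn N f * detn N g = detn N (fun i j => \sum_(l < N) f i l * g l j).
Proof.
rewrite /detn -det_mulmx; congr (\det _); apply/matrixP => i j; rewrite !mxE.
by apply: eq_bigr => l _; rewrite !mxE.
Qed.

Lemma detnN N f : detn N (fun i j => - f i j) = (-1) ^+ N * detn N f.
Proof.
by rewrite /detn -detZ; congr (\det _); apply/matrixP => i j; rewrite !mxE mulN1r.
Qed.

Lemma detn_trig N f : (forall i j, (i < j < N)%N -> f i j = 0) ->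
  detn N f = \prod_(i < N) f i i.
Proof.
move=> f0; rewrite /detn det_trig; first by apply: eq_bigr => i _; rewrite mxE.
by apply/is_trig_mxP => i j ij; rewrite mxE f0 // ij ltn_ord.
Qed.

Lemma detn_diag N (d : nat -> R) :
  detn N (fun i j => if i == j then d i else 0) = \prod_(i < N) d i.
Proof.
rewrite detn_trig; first by apply: eq_bigr => i _; rewrite eqxx.
by move=> i j /andP[ij _]; rewrite ltn_eqF.
Qed.

Lemma detn_rev N f : detn N (fun i j => f (N.-1 - i)%N (N.-1 - j)%N) = detn N f.
Proof.
pose r : {perm 'I_N} := perm (@rev_ord_inj N).
have E : \matrix_(i < N, j < N) f (N.-1 - i)%N (N.-1 - j)%N =
          row_perm r (col_perm r (\matrix_(i < N, j < N) f i j)).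
  by apply/matrixP => i j; rewrite !mxE !permE /=; congr f => /=; lia.
rewrite /detn E row_permE col_permE !det_mulmx !det_perm odd_permV.
by rewrite mulrCA -signr_addb addbb expr0 mulr1.
Qed.

Lemma expand_detn_col0 N f : detn N.+1 f =
  \sum_(i < N.+1) f i 0%N * ((-1) ^+ i * detn N (fun a b => f (bump i a) b.+1)).
Proof.
rewrite /detn (expand_det_col _ ord0); apply: eq_bigr => i _.
rewrite mxE /cofactor addn0; congr (_ * (_ * \det _)).
by apply/matrixP => a b; rewrite !mxE.
Qed.

Lemma detn_antiblock_ul m p f :
  (forall i j, (i < m)%N -> (j < p)%N -> f i j = 0) ->
  detn (m + p) f = (-1) ^+ (m * p) * detn m (fun i j => f i (p + j)%N)
                   * detn p (fun i j => f (m + i)%N j).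
Proof.
elim: p f => [|p IH] f f0; first by rewrite addn0 muln0 /detn det_mx00 mul1r mulr1.
rewrite addnS expand_detn_col0 (expand_detn_col0 p) -addnS big_split_ord /=.
rewrite big1 ?add0r => [|i _]; last by rewrite f0 // mul0r.
rewrite mulr_sumr; apply: eq_bigr => i _; rewrite IH => [|a b am bp]; last first.
  by rewrite /bump leqNgt ltn_addr // f0.
have -> : detn m (fun a b => f (bump (m + i) a) (p + b).+1)
          = detn m (fun a b => f a (p.+1 + b)%N).
  by apply: eq_detn => a b am _; rewrite /bump leqNgt ltn_addr.
have -> : detn p (fun a b => f (bump (m + i) (m + a)) b.+1)
          = detn p (fun a b => f (m + bump i a)%N b.+1).
  by apply: eq_detn => a b _ _; rewrite bumpDl.
rewrite exprD mulnS exprD; set T := detn m _; set Z := detn p _; ring.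
Qed.

Lemma detn_antiblock_dr m p f :
  (forall i j, (m <= i < m + p)%N -> (p <= j < m + p)%N -> f i j = 0) ->
  detn (m + p) f = (-1) ^+ (m * p) * detn m (fun i j => f i (p + j)%N)
                   * detn p (fun i j => f (m + i)%N j).
Proof.
move=> f0; rewrite -detn_rev addnC detn_antiblock_ul; last first.
  by move=> i j ip jm; apply: f0; apply/andP; split; lia.
rewrite mulnC -mulrA [in RHS]mulrAC -[in RHS]mulrA; congr (_ * (_ * _)).
  by rewrite -[RHS]detn_rev; apply: eq_detn => i j ip jm; congr f; lia.
by rewrite -[RHS]detn_rev; apply: eq_detn => i j ip jm; congr f; lia.
Qed.

End NatIndexedDeterminants.

Lemma poly_coef_wide (R : nzSemiRingType) (q : {poly R}) N : (size q <= N)%N ->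
  q = \sum_(i < N) q`_i *: 'X^i.
Proof.
move=> qN; rewrite -poly_def; apply/polyP => i; rewrite coef_poly.
by case: ltnP => // Ni; rewrite nth_default // (leq_trans qN).
Qed.

Lemma horner_map_polyC_X (R : comNzRingType) (f : {poly R}) : f^:P.['X] = f.
Proof.
rewrite (horner_coef_wide _ (size_poly _ _)) [RHS](poly_coef_wide (leqnn (size f))).
by apply: eq_bigr => i _; rewrite coef_map /= mul_polyC.
Qed.

Lemma detn_monic_coef (R : comNzRingType) N (P : nat -> {poly R}) :
  (forall i, P i \is monic) -> (forall i, size (P i) = i.+1) ->
  detn N (fun i a => (P i)`_a) = 1.
Proof.
move=> Pm Ps; rewrite detn_trig => [|i a /andP[ia _]]; last first.
  by rewrite nth_default // Ps.
by rewrite big1 // => i _; have /monicP := Pm i; rewrite /lead_coef Ps.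
Qed.

Section MomentDeterminants.
Variables (R : comNzRingType) (beta : {scalar {poly R}}).

Lemma scalar_mul_coef N (P Q : {poly R}) : (size P <= N)%N -> (size Q <= N)%N ->
  beta (P * Q) = \sum_(a < N) \sum_(b < N) P`_a * beta 'X^(a + b) * Q`_b.
Proof.
move=> sP sQ; rewrite [in LHS](poly_coef_wide sP) [in LHS](poly_coef_wide sQ).
rewrite mulr_suml linear_sum; apply: eq_bigr => a _.
rewrite mulr_sumr linear_sum; apply: eq_bigr => b _.
by rewrite -scalerAl -scalerAr !linearZ /= -exprD mulrCA mulrC.
Qed.

Lemma detn_monic_basis N (P Q : nat -> {poly R}) :
  (forall i, P i \is monic) -> (forall i, size (P i) = i.+1) ->
  (forall j, Q j \is monic) -> (forall j, size (Q j) = j.+1) ->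
  detn N (fun i j => beta (P i * Q j)) = detn N (fun i j => beta 'X^(i + j)).
Proof.
move=> Pm Ps Qm Qs; transitivity (detn N (fun i a => (P i)`_a)
  * detn N (fun i j => beta 'X^(i + j)) * detn N (fun b j => (Q j)`_b)).
  rewrite !detn_mul; apply: eq_detn => i j iN jN.
  rewrite (scalar_mul_coef (N := N)) ?Ps ?Qs // exchange_big.
  by apply: eq_bigr => b _; rewrite mulr_suml.
rewrite (detn_tr N (fun j b => (Q j)`_b)) !detn_monic_coef //.
by rewrite mul1r mulr1.
Qed.

End MomentDeterminants.

Section Lagrange.
Variables (F : fieldType) (k : nat) (y : nat -> F).
Hypothesis y_neq : forall i j, (i < k)%N -> (j < k)%N -> i != j -> y i != y j.

Definition lagrange_basis (l : nat) : {poly F} :=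
  \prod_(m < k | (m : nat) != l) ('X - (y m)%:P).
Definition lagrange_weight (l : nat) : F := \prod_(m < k | (m : nat) != l) (y l - y m).
Definition vandermonde : F := \prod_(i < k) \prod_(j < k | (i < j)%N) (y i - y j).
(* The divided difference of u^s at y_0, ..., y_(k-1). *)
Definition divdiff_pow (s : nat) : F := \sum_(l < k) y l ^+ s / lagrange_weight l.

Lemma size_lagrange_basis l : (l < k)%N -> size (lagrange_basis l) = k.
Proof.
move=> lk; have k0 : (0 < k)%N by apply: leq_ltn_trans lk.
rewrite /lagrange_basis -big_filter size_prod_XsubC size_filter.
have := cardC1 (Ordinal lk); rewrite card_ord cardE /enum_mem size_filter.
by move=> ck; rewrite -[RHS](prednK k0) -ck.
Qed.

Lemma lagrange_basis_top l : (l < k)%N -> (lagrange_basis l)`_k.-1 = 1.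
Proof.
move=> lk; have /monicP : lagrange_basis l \is monic by exact: monic_prod_XsubC.
by rewrite /lead_coef size_lagrange_basis.
Qed.

Lemma horner_lagrange_basis a l : (a < k)%N ->
  (lagrange_basis l).[y a] = if a == l then lagrange_weight l else 0.
Proof.
move=> ak; rewrite horner_prod; case: eqP => [->|/eqP al].
  by apply: eq_bigr => m _; rewrite hornerXsubC.
by rewrite (bigD1 (Ordinal ak)) //= hornerXsubC subrr mul0r.
Qed.

Lemma lagrange_weight_neq0 l : (l < k)%N -> lagrange_weight l != 0.
Proof.
by move=> lk; apply/prodf_neq0 => m ml; rewrite subr_eq0 y_neq // eq_sym.
Qed.

Lemma vandermonde_neq0 : vandermonde != 0.
Proof.
apply/prodf_neq0 => i _; apply/prodf_neq0 => j ij.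
by rewrite subr_eq0 y_neq // neq_ltn ij.
Qed.

Lemma sum_pow_lagrange_coef a l : (a < k)%N -> (l < k)%N ->
  \sum_(b < k) y a ^+ b * (lagrange_basis l)`_b
    = if a == l then lagrange_weight l else 0.
Proof.
move=> ak lk; rewrite -horner_lagrange_basis //.
rewrite (horner_coef_wide _ (eq_leq (size_lagrange_basis lk))).
by apply: eq_bigr => b _; rewrite mulrC.
Qed.

Lemma detn_pow : detn k (fun a b => y a ^+ b) =
  \prod_(i < k) \prod_(j < k | (i < j)%N) (y j - y i).
Proof.
rewrite -detn_tr /detn.
have -> : \matrix_(i < k, j < k) y j ^+ i = Vandermonde k (\row_(j < k) y j).
  by apply/matrixP => i j; rewrite !mxE.
by rewrite det_Vandermonde; apply: eq_bigr => i _; apply: eq_bigr => j _; rewrite !mxE.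
Qed.

Lemma prod_lagrange_weight :
  \prod_(l < k) lagrange_weight l = detn k (fun a b => y a ^+ b) * vandermonde.
Proof.
rewrite (eq_bigr (fun l : 'I_k => (\prod_(m < k | (m < l)%N) (y l - y m)) *
                                  (\prod_(m < k | (l < m)%N) (y l - y m)))).
  by rewrite big_split /= detn_pow (exchange_big_dep xpredT).
move=> l _; rewrite /lagrange_weight (bigID (fun m : 'I_k => (m < l)%N)) /=.
by congr (_ * _); apply: eq_bigl => m; case: ltngtP.
Qed.

Lemma detn_lagrange_coef : detn k (fun b l => (lagrange_basis l)`_b) = vandermonde.
Proof.
have pow_neq0 : detn k (fun a b => y a ^+ b) != 0.
  rewrite detn_pow; apply/prodf_neq0 => i _; apply/prodf_neq0 => j ij.
  by rewrite subr_eq0 y_neq // neq_ltn ij orbT.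
apply: (mulfI pow_neq0); rewrite detn_mul -prod_lagrange_weight -detn_diag.
by apply: eq_detn => a l ak lk; rewrite sum_pow_lagrange_coef //; case: eqP => // ->.
Qed.

(* (y_a^b) and ((lagrange_basis l)_b / lagrange_weight l) are inverse matrices. *)
Lemma sum_lagrange_coef_pow (i s : 'I_k) :
  \sum_(l < k) (lagrange_basis l)`_i / lagrange_weight l * y l ^+ s = (i == s)%:R.
Proof.
pose A := \matrix_(a < k, b < k) y a ^+ b.
pose B := \matrix_(b < k, l < k) ((lagrange_basis l)`_b / lagrange_weight l).
have /mulmx1C/matrixP/(_ i s) : A *m B = 1%:M.
  apply/matrixP => a l; rewrite !mxE.
  under eq_bigr do rewrite !mxE mulrA.
  rewrite -mulr_suml sum_pow_lagrange_coef //.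
  have -> : ((a : nat) == l) = (a == l) by [].
  by case: ifP => _; rewrite ?divff ?lagrange_weight_neq0 ?mul0r.
by rewrite !mxE => <-; apply: eq_bigr => l _; rewrite !mxE.
Qed.

Lemma divdiff_pow_small s : (s < k)%N -> divdiff_pow s = (s == k.-1)%:R.
Proof.
move=> sk; have km : (k.-1 < k)%N by rewrite prednK // (leq_ltn_trans _ sk).
rewrite eq_sym -[s]/(Ordinal sk : nat) -[k.-1]/(Ordinal km : nat).
rewrite -(sum_lagrange_coef_pow (Ordinal km)); apply: eq_bigr => l _.
by rewrite lagrange_basis_top // mul1r mulrC.
Qed.

Lemma sum_divdiff_pow_lagrange_coef c l : (l < k)%N ->
  \sum_(b < k) divdiff_pow (c + b) * (lagrange_basis l)`_b = y l ^+ c.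
Proof.
move=> lk; rewrite /divdiff_pow; under eq_bigr do rewrite mulr_suml.
rewrite exchange_big /= (eq_bigr (fun m : 'I_k => y m ^+ c / lagrange_weight m *
  (if (m : nat) == l then lagrange_weight l else 0))) => [|m _]; last first.
  rewrite -sum_pow_lagrange_coef // mulr_sumr.
  by apply: eq_bigr => b _; rewrite exprD; ring.
rewrite (bigD1 (Ordinal lk)) //= eqxx divfK ?lagrange_weight_neq0 //.
rewrite big1 ?addr0 // => m ml.
by rewrite (_ : (m : nat) == l = false) ?mulr0 //; exact: negbTE ml.
Qed.

End Lagrange.

Section MomentFunctional.
Variables (K : fieldType) (L : {poly K} -> K).
Hypothesis L_linear : forall (a : K) (f g : {poly K}), L (a *: f + g) = a * L f + L g.
HB.instance Definition _ := GRing.isLinear.Build K {poly K} K *%R L L_linear.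

Lemma fint_sum k (I : Type) (r : seq I) (P : pred I) (G : I -> mfps {poly K} k) :
  fint L (\sum_(i <- r | P i) G i) = \sum_(i <- r | P i) fint L (G i).
Proof. exact: raddf_sum. Qed.

Lemma fint_mconst k f : fint L (mconst k f) = mconst k (L f).
Proof. exact: mmap_mconst. Qed.

Lemma fint_mulCl k (c : mfps K k) (g : mfps {poly K} k) :
  fint L (mmap (@polyC K) c * g) = c * fint L g.
Proof.
rewrite /fint; elim: k c g => [|k IH] c g /=; first by rewrite mul_polyC linearZ.
apply: fps_ext => n; rewrite fcoefM.
transitivity (mmap L (fcoef (map_fps (mmap (@polyC K) (k:=k)) c * g) n)); first by [].
by rewrite fcoefM raddf_sum; apply: eq_bigr => j _; exact: IH.
Qed.

Variable k : nat.
Local Notation S := (mfps K k).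
Local Notation F := {fraction S}.
Local Notation y := (yvar K k).

Definition nu (P : {poly F}) : F := \sum_(i < size P) P`_i * (int_mono L k i)%:F.

Lemma nu_wide N (P : {poly F}) : (size P <= N)%N ->
  nu P = \sum_(i < N) P`_i * (int_mono L k i)%:F.
Proof.
move=> sP; rewrite /nu (big_ord_widen N (fun i => P`_i * (int_mono L k i)%:F) sP).
rewrite big_mkcond /=.
by apply: eq_bigr => i _; case: ltnP => // Pi; rewrite nth_default // mul0r.
Qed.

Lemma nu_is_linear : linear_for *%R nu.
Proof.
move=> a P Q; pose N := maxn (size P) (size Q).
have sP : (size P <= N)%N by rewrite leq_maxl.
have sQ : (size Q <= N)%N by rewrite leq_maxr.
have sPQ : (size (a *: P + Q)%R <= N)%N.
  by rewrite (leq_trans (size_polyD _ _)) // geq_max (leq_trans (size_scale_leq _ _)).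
rewrite (nu_wide sPQ) (nu_wide sP) (nu_wide sQ) mulr_sumr -big_split /=.
by apply: eq_bigr => i _; rewrite coefD coefZ mulrDl mulrA.
Qed.

HB.instance Definition _ := GRing.isLinear.Build F {poly F} F *%R nu nu_is_linear.

Lemma nuXn s : nu 'X^s = (int_mono L k s)%:F.
Proof.
rewrite /nu size_polyXn big_ord_recr /= coefXn eqxx mul1r big1 ?add0r // => i _.
by rewrite coefXn ltn_eqF // mul0r.
Qed.

Definition uvar : mfps {poly K} k := mconst k 'X.
Definition cauchy_prod : mfps {poly K} k := \prod_(l < k) cauchy_kernel K k l.

Definition eval_u (P : {poly S}) : mfps {poly K} k :=
  (map_poly (@mmap _ _ (@polyC K) k) P).[uvar].

HB.instance Definition _ := GRing.RMorphism.copy eval_u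
  (horner_eval uvar \o map_poly (@mmap _ _ (@polyC K) k)).

Lemma nu_tofrac (P : {poly S}) :
  nu (map_poly (@tofrac S) P) = (fint L (eval_u P * cauchy_prod))%:F.
Proof.
rewrite (nu_wide (size_poly _ _)) /eval_u (horner_coef_wide _ (size_poly _ _)).
rewrite mulr_suml fint_sum rmorph_sum; apply: eq_bigr => i _.
by rewrite !coef_map -mulrA fint_mulCl rmorphM /uvar -rmorphXn.
Qed.

Lemma eval_u_mconst (f : {poly K}) : eval_u (map_poly (@mconst K k) f) = mconst k f.
Proof.
rewrite /eval_u -map_poly_comp.
rewrite (eq_map_poly (g := @mconst {poly K} k \o @polyC K)) => [|a].
  by rewrite map_poly_comp horner_map /= horner_map_polyC_X.
exact: mmap_mconst.
Qed.

Lemma eval_u_factor_cauchy l : (l < k)%N ->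
  eval_u ((mvar K k l)%:P * 'X - 1) * cauchy_kernel K k l
    = mmap (@polyC K) (mvar K k l).
Proof.
move=> lk; rewrite rmorphB rmorphM rmorph1 /= /eval_u map_polyC map_polyX hornerC hornerX.
by rewrite /= mmap_polyC_mvar // mulrC [_ * uvar]mulrC cauchy_kernelP.
Qed.

Lemma eval_u_prod_cauchy (P : pred 'I_k) :
  eval_u (\prod_(l < k | P l) ((mvar K k l)%:P * 'X - 1)) * cauchy_prod
  = mmap (@polyC K) (\prod_(l < k | P l) mvar K k l)
    * \prod_(l < k | ~~ P l) cauchy_kernel K k l.
Proof.
rewrite [eval_u _]rmorph_prod /cauchy_prod [X in _ * X](bigID P) /= mulrA.
rewrite -big_split rmorph_prod.
by congr (_ * _); apply: eq_bigr => l _; exact: eval_u_factor_cauchy.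
Qed.

Definition liftF (f : {poly K}) : {poly F} :=
  map_poly (@tofrac S) (map_poly (@mconst K k) f).

Lemma map_tofrac_factor l : (l < k)%N -> map_poly (@tofrac S) ((mvar K k l)%:P * 'X - 1)
  = ((mvar K k l)%:F)%:P * ('X - (y l)%:P).
Proof.
move=> lk; rewrite rmorphB rmorphM /= map_polyC map_polyX rmorph1 mulrBr -polyCM.
by rewrite /yvar divff // tofrac_eq0 mvar_neq0.
Qed.

Lemma nu_liftF_prod (P : pred 'I_k) f :
  nu (liftF f * \prod_(l < k | P l) ('X - (y l)%:P))
  = (fint L (mconst k f * \prod_(l < k | ~~ P l) cauchy_kernel K k l))%:F.
Proof.
have := nu_tofrac
  (map_poly (@mconst K k) f * \prod_(l < k | P l) ((mvar K k l)%:P * 'X - 1)).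
rewrite [eval_u _]rmorphM /= eval_u_mconst -mulrA eval_u_prod_cauchy mulrCA fint_mulCl.
rewrite rmorphM rmorph_prod (eq_bigr _ (fun l _ => map_tofrac_factor (ltn_ord l))).
rewrite big_split /= -rmorph_prod mulrCA mul_polyC linearZ rmorphM rmorph_prod /=.
by move/mulfI; apply; apply/prodf_neq0 => l _; rewrite tofrac_eq0 mvar_neq0.
Qed.

End MomentFunctional.

Lemma signr_mul_sub (R : nzRingType) (a b : nat) : (b <= a)%N ->
  (-1) ^+ (a * b) = (-1) ^+ ((a - b) * b) * (-1) ^+ b :> R.
Proof.
move=> ba; rewrite -exprD -signr_odd [RHS]/= -[RHS]signr_odd; congr (_ ^+ _).
by rewrite -{1}(subnK ba) mulnDl !oddD !oddM andbb.
Qed.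

Section OrthogonalPolynomials.
Variables (K : fieldType) (L : {poly K} -> K).
Hypothesis L_linear : forall (a : K) (f g : {poly K}), L (a *: f + g) = a * L f + L g.
HB.instance Definition _ := GRing.isLinear.Build K {poly K} K *%R L L_linear.
Variables (p : nat -> {poly K}) (omega : nat -> K).
Hypothesis p_monic : forall n, p n \is monic.
Hypothesis p_size : forall n, size (p n) = n.+1.
Hypothesis p_orth : forall m n, L (p m * p n) = if m == n then omega n else 0.
Hypothesis omega_neq0 : forall n, omega n != 0.

Lemma hankel_prod m : hankel L m = \prod_(i < m) omega i.
Proof.
rewrite /hankel -[\det _]/(detn m (fun i j => L 'X^(i + j))).
rewrite -(detn_monic_basis _ _ p_monic p_size p_monic p_size) -detn_diag.
by apply: eq_detn => i j _ _; rewrite /= p_orth; case: eqP => // ->.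
Qed.

Variable k : nat.
Local Notation S := (mfps K k).
Local Notation F := {fraction S}.
Local Notation y := (yvar K k).
Local Notation nu := (@nu K L k).
Local Notation liftF := (@liftF K k).
Local Notation lagrange := (lagrange_basis k y).

Definition pi_y : {poly F} := \prod_(l < k) ('X - (y l)%:P).

Lemma yvar_neq i j : (i < k)%N -> (j < k)%N -> i != j -> y i != y j.
Proof.
move=> ik jk ij; apply: contra ij => /eqP /invr_inj /eqP.
by rewrite tofrac_eq => /eqP /(mvar_inj ik jk) ->.
Qed.

Lemma size_liftF i : size (liftF (p i)) = i.+1.
Proof. by rewrite /liftF -map_poly_comp size_map_poly. Qed.

Lemma monic_liftF i : liftF (p i) \is monic.
Proof. by rewrite /liftF -map_poly_comp monic_map. Qed.

Lemma monic_pi_y : pi_y \is monic.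
Proof. exact: monic_prod_XsubC. Qed.

Lemma size_pi_y : size pi_y = k.+1.
Proof. by rewrite size_prod_XsubC [index_enum _]unlock -enumT size_enum_ord. Qed.

Lemma det_int_mono n : \det (\matrix_(i < n, j < n) (int_mono L k (i + j))%:F)
  = detn n (fun i j => nu 'X^(i + j)).
Proof. by congr (\det _); apply/matrixP => i j; rewrite !mxE nuXn. Qed.

Lemma sum_nu_mulXn (P Q : {poly F}) : (size Q <= k)%N ->
  \sum_(b < k) nu (P * 'X^b) * Q`_b = nu (P * Q).
Proof.
move=> sQ; rewrite [in RHS](poly_coef_wide sQ) mulr_sumr linear_sum.
by apply: eq_bigr => b _; rewrite -scalerAr linearZ /= mulrC.
Qed.

Lemma nu_p_lagrange a l : (l < k)%N ->
  nu (liftF (p a) * lagrange l) = - (qfun L p k a l)%:F.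
Proof.
move=> lk; rewrite /lagrange_basis (nu_liftF_prod L_linear).
rewrite (big_pred1 (Ordinal lk)) => [|m].
  by rewrite /qfun mulrN /fint raddfN rmorphN opprK.
by rewrite negbK.
Qed.

Lemma nu_p_p_pi_y i j :
  nu (liftF (p i) * (liftF (p j) * pi_y)) = if i == j then (mconst k (omega i))%:F else 0.
Proof.
rewrite /pi_y mulrA -rmorphM /= -rmorphM /= -/(liftF _) (nu_liftF_prod L_linear).
rewrite big_pred0 // mulr1 fint_mconst // p_orth.
by case: eqP => [->|_] //; rewrite !rmorph0.
Qed.

Lemma detn_mul_lagrange (g : nat -> nat -> F) :
  detn k g * vandermonde_y K k = detn k (fun a l => \sum_(b < k) g a b * (lagrange l)`_b).
Proof.
by rewrite -[vandermonde_y K k]/(vandermonde k y) -(detn_lagrange_coef yvar_neq) detn_mul.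
Qed.

Lemma vandermonde_y_neq0 : vandermonde_y K k != 0.
Proof. exact: (vandermonde_neq0 yvar_neq). Qed.

Lemma detn_nu_Xn_vandermonde a0 :
  detn k (fun i j => nu (liftF (p (a0 + i)) * 'X^j)) * vandermonde_y K k
    = (-1) ^+ k * \det (\matrix_(i < k, j < k) (qfun L p k (a0 + j) i)%:F).
Proof.
rewrite detn_mul_lagrange (eq_detn (g := fun i j => - (qfun L p k (a0 + i) j)%:F)).
  by rewrite detnN; congr (_ * _); rewrite -detn_tr.
by move=> i j _ jk; rewrite sum_nu_mulXn ?nu_p_lagrange // size_lagrange_basis.
Qed.

Section AtLeastKRows.
Variable n : nat.
Hypothesis kn : (k <= n)%N.

Definition basis_pi_y j : {poly F} :=
  if (j < k)%N then 'X^j else liftF (p (j - k)) * pi_y.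

Lemma monic_basis_pi_y j : basis_pi_y j \is monic.
Proof.
rewrite /basis_pi_y; case: ltnP => _; first exact: monicXn.
by rewrite monicMr ?monic_liftF ?monic_pi_y.
Qed.

Lemma size_basis_pi_y j : size (basis_pi_y j) = j.+1.
Proof.
rewrite /basis_pi_y; case: ltnP => jk; first by rewrite size_polyXn.
rewrite size_Mmonic ?monic_neq0 ?monic_liftF ?monic_pi_y // size_liftF size_pi_y.
by rewrite addSn addnS /= subnK.
Qed.

Lemma detn_nu_basis_pi_y : detn n (fun i j => nu (liftF (p i) * basis_pi_y j)) =
  (-1) ^+ ((n - k) * k) * (mconst k (hankel L (n - k)))%:F
  * detn k (fun i j => nu (liftF (p (n - k + i)) * 'X^j)).
Proof.
rewrite -{1}(subnK kn) detn_antiblock_dr => [|i j /andP[ki _] /andP[kj jn]]; last first.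
  by rewrite /basis_pi_y ltnNge kj /= nu_p_p_pi_y ifN_eq //; apply/eqP; lia.
congr (_ * _ * _); last by apply: eq_detn => i j _ jk; rewrite /basis_pi_y jk.
transitivity (detn (n - k) (fun i j => if i == j then (mconst k (omega i))%:F else 0)).
  apply: eq_detn => i j _ _; rewrite /basis_pi_y ltnNge leq_addr /= nu_p_p_pi_y addKn.
  by case: eqP => // _; rewrite !rmorph0.
by rewrite detn_diag hankel_prod !rmorph_prod.
Qed.

Lemma det_int_mono_geq :
  (\det (\matrix_(i < n, j < n) (int_mono L k (i + j))%:F) : F)
    / (mconst k (hankel L (n - k)))%:F
  = (-1) ^+ (n * k) * \det (\matrix_(i < k, j < k) (qfun L p k (n - k + j) i)%:F)
    / vandermonde_y K k.
Proof.
have H0 : (mconst k (hankel L (n - k)))%:F != 0 :> F.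
  rewrite tofrac_eq0 fmorph_eq0 hankel_prod; apply/prodf_neq0 => i _; exact: omega_neq0.
rewrite det_int_mono -(detn_monic_basis _ n monic_liftF size_liftF monic_basis_pi_y
  size_basis_pi_y) detn_nu_basis_pi_y [_ * _ * detn _ _]mulrAC mulfK //.
apply: (mulIf vandermonde_y_neq0); rewrite divfK ?vandermonde_y_neq0 //.
by rewrite -mulrA detn_nu_Xn_vandermonde mulrA -signr_mul_sub.
Qed.

End AtLeastKRows.

Section FewerThanKRows.
Variable n : nat.
Hypothesis nk : (n < k)%N.

Definition extended_moments a j : F :=
  if (a < k - n)%N then divdiff_pow k y (k - n - 1 - a + j)
  else - nu (liftF (p (a - (k - n))) * 'X^j).

Lemma detn_extended_moments_vandermonde :
  detn k extended_moments * vandermonde_y K k =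
  \det (\matrix_(i < k, j < k) (if (j < k - n)%N then y i ^+ (k - n - 1 - j)
                                else (qfun L p k (j - (k - n)) i)%:F)).
Proof.
rewrite detn_mul_lagrange; transitivity (detn k (fun a l =>
  if (a < k - n)%N then y l ^+ (k - n - 1 - a) else (qfun L p k (a - (k - n)) l)%:F));
  last by rewrite detn_tr.
apply: eq_detn => a l ak lk.
rewrite /extended_moments; case: ltnP => _.
  exact: (sum_divdiff_pow_lagrange_coef yvar_neq).
under eq_bigr do rewrite mulNr.
by rewrite sumrN sum_nu_mulXn ?nu_p_lagrange ?opprK // size_lagrange_basis.
Qed.

Lemma detn_extended_moments : detn k extended_moments =
  (-1) ^+ ((k - n) * n) * ((-1) ^+ n * detn n (fun i j => nu (liftF (p i) * 'X^j))).
Proof.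
have dd_lt s : (s < k.-1)%N -> divdiff_pow k y s = 0.
  by move=> sk; rewrite (divdiff_pow_small yvar_neq) ?ltn_eqF //; lia.
have dd_top : divdiff_pow k y k.-1 = 1.
  by rewrite (divdiff_pow_small yvar_neq) ?eqxx //; lia.
have -> : detn k extended_moments = detn (k - n + n) extended_moments.
  by rewrite subnK // ltnW.
rewrite detn_antiblock_ul => [|a j akn jn]; last first.
  by rewrite /extended_moments akn dd_lt //; lia.
rewrite -mulrA -detnN; congr (_ * _).
rewrite -detn_tr detn_trig => [|i j /andP[ij jkn]]; last first.
  by rewrite /extended_moments jkn dd_lt //; lia.
rewrite big1 ?mul1r => [|i _]; last first.
  rewrite /extended_moments ltn_ord (_ : _ + _ = k.-1)%N ?dd_top //.
  by have := ltn_ord i; clear -nk; lia.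
by apply: eq_detn => i j _ _; rewrite /extended_moments ltnNge leq_addr /= addKn.
Qed.

Lemma det_int_mono_lt :
  (\det (\matrix_(i < n, j < n) (int_mono L k (i + j))%:F) : F)
  = (-1) ^+ (n * k)
    * \det (\matrix_(i < k, j < k) (if (j < k - n)%N then y i ^+ (k - n - 1 - j)
                                   else (qfun L p k (j - (k - n)) i)%:F))
    / vandermonde_y K k.
Proof.
rewrite -detn_extended_moments_vandermonde mulrA mulfK ?vandermonde_y_neq0 //.
rewrite detn_extended_moments det_int_mono mulnC (signr_mul_sub _ (ltnW nk)).
rewrite -(detn_monic_basis _ n monic_liftF size_liftF (@monicXn _) (@size_polyXn _)).
set D := detn n _; set s := (-1) ^+ ((k - n) * n); set t := (-1) ^+ n.
have sqr_sign m : (-1) ^+ m * (-1) ^+ m = 1 :> F.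
  by rewrite -exprD -signr_odd oddD addbb.
transitivity (s * s * (t * t) * D); first by rewrite !sqr_sign !mul1r.
by ring.
Qed.

End FewerThanKRows.

End OrthogonalPolynomials.

Unset Implicit Arguments.
Set Strict Implicit.
Theorem corollary3
  (K : fieldType) (charK0 : [pchar K] =i pred0)
  (L : {poly K} -> K)
  (L_linear : forall (a : K) (f g : {poly K}), L (a *: f + g) = a * L f + L g)
  (p : nat -> {poly K}) (omega : nat -> K)
  (p_monic : forall n, p n \is monic)
  (p_size : forall n, size (p n) = n.+1)
  (p_orth : forall m n, L (p m * p n) = if m == n then omega n else 0)
  (omega_neq0 : forall n, omega n != 0)
  (k n : nat) :
  ((k <= n)%N ->
     (\det (\matrix_(i < n, j < n) (int_mono L k (i + j))%:F)
        : {fraction mfps K k})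
       / (mconst k (hankel L (n - k)))%:F
     = (-1) ^+ (n * k)
       * \det (\matrix_(i < k, j < k) (qfun L p k (n - k + j) i)%:F)
       / vandermonde_y K k)
  /\
  ((n < k)%N ->
     (\det (\matrix_(i < n, j < n) (int_mono L k (i + j))%:F)
        : {fraction mfps K k})
     = (-1) ^+ (n * k)
       * \det (\matrix_(i < k, j < k)
                 (if (j < k - n)%N then yvar K k i ^+ (k - n - 1 - j)
                  else (qfun L p k (j - (k - n)) i)%:F))
       / vandermonde_y K k).
Proof.
split=> [kn | nk].
- exact: (det_int_mono_geq L_linear p_monic p_size p_orth omega_neq0).
- exact: (det_int_mono_lt L_linear p_monic p_size).
Qed.
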